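(* Let $\sigma>0$, $\eta>0$, $\hat{\alpha}>0$, $h>0$, $r\ge 0$ and $a\in\mathbb{R}$ be constants. Then there exist a constant $\beta^*>0$ and a function $v\in C^1[0,\infty)$ such that $$\beta^* = -\frac{\hat{\alpha}}{4}v(y)^2 + \frac{1}{2}\sigma^2 v'(y) - \eta y\, v(y) + a\, v(y) + h y \quad \text{for all } y\ge 0,$$ $v(0)=-r$, $v$ is nondecreasing on $[0,\infty)$, and $\lim_{y\to\infty} v(y) = h/\eta$.
   Context: This is the (differentiated) Bellman equation of a one-dimensional drift-rate control problem: $\sigma^2$ is the variance and $a$ the drift of a Brownian motion, $\eta$ a mean-reversion rate, $\hat{\alpha}$ a quadratic control-cost parameter (control cost $x^2/\hat{\alpha}$), $h$ a holding-cost rate and $r$ a reflection (idleness) cost rate. *)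

From Stdlib Require Import Reals.
From Coquelicot Require Import Coquelicot.
Open Scope R_scope.

Definition C1_nonneg (v dv : R -> R) : Prop :=
  (forall y, 0 < y -> is_derive v y (dv y)) /\
  filterlim (fun t => (v t - v 0) / t) (at_right 0) (locally (dv 0)) /\
  (forall y, 0 < y -> continuous dv y) /\
  filterlim dv (at_right 0) (locally (dv 0)).

(* Writing v(y) = h/eta - psi(y + z0)/k with k = alpha_hat/(2 sigma^2) and
   z0 = -a/eta + alpha_hat h/(2 eta^2) turns the Bellman equation into the Riccati
   equation psi' = b z psi - E - psi^2 with b = 2 eta/sigma^2, where beta* is an affine
   function of the free constant E, and v(0) = -r becomes psi(z0) = T := k (h/eta + r).
   The substitution psi = phi'/phi linearises it to phi'' = b z phi' - E phi,
   phi(z0) = 1, phi'(z0) = T, whose solution is an entire power series.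

   E is chosen by shooting: E* is the infimum of the energies for which phi_E becomes
   negative somewhere on [z0, oo).  That set is nonempty (for large E, psi reaches -oo
   in finite time), bounded below by 0 and open, so phi_E* > 0.  Positivity of phi_E
   also holds for all E near any energy at which phi stays positive up to a point z
   where phi' > (b z/2) phi and E + b/2 < b^2 z^2/4; hence at E* we get psi <= b z/2
   for all large z, which forces psi <= 2 E*/(b z) -> 0.  At a zero of psi' we would
   have psi'' = b psi > 0, so psi' < 0 throughout.  Hence v is increasing with limit
   h/eta, and beta* > 0 is read off the equation at the zero of v. *)

From Stdlib Require Import Reals Lra Lia Arith Classical.
From Coquelicot Require Import Coquelicot.
Open Scope R_scope.

(** * Real functions on intervals *)

Lemma continuity_pt_pos_locally (f : R -> R) x :
  continuity_pt f x -> 0 < f x ->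
  exists d, 0 < d /\ forall y, Rabs (y - x) < d -> 0 < f y.
Proof.
  intros Hc Hpos.
  destruct (Hc (f x / 2)) as [d [Hd Hnear]]; [lra|].
  exists d; split; [exact Hd|]. intros y Hy.
  destruct (Req_dec y x) as [->|Hne]; [exact Hpos|].
  assert (Hdist : R_dist (f y) (f x) < f x / 2).
  { apply Hnear. split; [split; [exact I|congruence]|exact Hy]. }
  unfold R_dist in Hdist. apply Rabs_def2 in Hdist. lra.
Qed.

Lemma first_root (f : R -> R) a b : a <= b ->
  (forall x, a <= x <= b -> continuity_pt f x) -> 0 < f a -> f b <= 0 ->
  exists p, a < p <= b /\ f p = 0 /\ forall x, a <= x < p -> 0 < f x.
Proof.
  intros Hab Hc Ha Hb.
  set (U x := a <= x <= b /\ forall y, a <= y <= x -> 0 < f y).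
  assert (HUa : U a) by (split; [lra|]; intros y Hy; replace y with a by lra; exact Ha).
  destruct (completeness U) as [p [Hub Hlub]].
  { exists b. intros x [Hx _]. lra. }
  { exists a. exact HUa. }
  assert (Hap : a <= p) by (apply Hub, HUa).
  assert (Hpb : p <= b) by (apply Hlub; intros x [Hx _]; lra).
  assert (Hbefore : forall x, a <= x < p -> 0 < f x).
  { intros x Hx. apply NNPP. intros Hnpos.
    assert (p <= x); [|lra]. apply Hlub. intros z [Hz Hzpos].
    destruct (Rle_lt_dec z x) as [|Hxz]; [assumption|].
    exfalso. apply Hnpos, Hzpos. lra. }
  exists p. destruct (Rtotal_order (f p) 0) as [Hneg|[Hzero|Hpos]].
  - exfalso.
    destruct (continuity_pt_pos_locally (fun x => - f x) p) as [d [Hd Hnear]].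
    { apply continuity_pt_opp, Hc; lra. }
    { lra. }
    assert (Hpa : a < p) by (destruct (Req_dec p a) as [->|]; lra).
    set (y := Rmax a (p - d / 2)).
    assert (Hy : a <= y < p /\ Rabs (y - p) < d).
    { unfold y, Rmax; destruct Rle_dec; split; try (rewrite Rabs_left); lra. }
    assert (Hfy := Hbefore y (proj1 Hy)). specialize (Hnear y (proj2 Hy)). lra.
  - split; [|split; [exact Hzero|exact Hbefore]].
    destruct (Req_dec p a) as [->|]; lra.
  - exfalso.
    destruct (continuity_pt_pos_locally f p) as [d [Hd Hnear]]; [apply Hc; lra|lra|].
    assert (Hpb' : p < b) by (destruct (Req_dec p b) as [->|]; lra).
    set (y := Rmin b (p + d / 2)).
    assert (Hy : p < y <= b) by (unfold y, Rmin; destruct Rle_dec; lra).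
    assert (HUy : U y).
    { split; [lra|]. intros z Hz. destruct (Rlt_le_dec z p); [apply Hbefore; lra|].
      apply Hnear. unfold y, Rmin in Hz. destruct Rle_dec; rewrite Rabs_right; lra. }
    specialize (Hub y HUy). lra.
Qed.

Lemma is_derive_continuity_pt (f : R -> R) x l : is_derive f x l -> continuity_pt f x.
Proof.
  intros H. apply continuity_pt_filterlim. apply (ex_derive_continuous f). now exists l.
Qed.

Lemma is_derive_pos_root_sign (f : R -> R) p l :
  is_derive f p l -> 0 < l -> f p = 0 ->
  exists d, 0 < d /\ forall x, Rabs (x - p) < d ->
    (x < p -> f x < 0) /\ (p < x -> 0 < f x).
Proof.
  intros Hd Hl Hp. apply is_derive_Reals in Hd.
  destruct (Hd (l / 2)) as [d Hnear]; [lra|].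
  exists d; split; [apply cond_pos|]. intros x Hx.
  destruct (Req_dec x p) as [->|Hne]; [split; intros; lra|].
  assert (Hq := Hnear (x - p) ltac:(lra) Hx).
  replace (p + (x - p)) with x in Hq by ring. rewrite Hp, Rminus_0_r in Hq.
  apply Rabs_def2 in Hq.
  assert (Hquot : 0 < f x / (x - p)) by lra.
  replace (f x) with (f x / (x - p) * (x - p)) by (field; lra).
  split; intros; nra.
Qed.

Lemma is_derive_local_min (f : R -> R) p l e : is_derive f p l -> 0 < e ->
  (forall x, Rabs (x - p) < e -> f p <= f x) -> l = 0.
Proof.
  intros Hd He Hmin. apply is_derive_Reals in Hd.
  apply (deriv_minimum f (p - e) (p + e) p (exist _ l Hd)); [lra|lra|].
  intros x H1 H2. apply Hmin, Rabs_def1; lra.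
Qed.

Lemma pos_of_deriv_pos_at_first_root (g dg : R -> R) a :
  (forall x, a <= x -> is_derive g x (dg x)) -> 0 < g a ->
  (forall p, a < p -> g p = 0 -> (forall y, a <= y < p -> 0 < g y) -> 0 < dg p) ->
  forall x, a <= x -> 0 < g x.
Proof.
  intros Hd Ha Hroot x Hx.
  destruct (Rlt_le_dec 0 (g x)) as [|Hle]; [assumption|exfalso].
  destruct (first_root g a x Hx) as [p [Hp [Hp0 Hbefore]]]; auto.
  { intros y Hy. apply (is_derive_continuity_pt g y (dg y)), Hd. lra. }
  destruct (is_derive_pos_root_sign g p (dg p)) as [d [Hd0 Hsign]];
    [apply Hd; lra|apply Hroot; [lra|exact Hp0|exact Hbefore]|exact Hp0|].
  set (y := Rmax a (p - d / 2)).
  assert (Hy : a <= y < p /\ Rabs (y - p) < d).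
  { unfold y, Rmax; destruct Rle_dec; split; try (rewrite Rabs_left); lra. }
  assert (Hgy := Hbefore y (proj1 Hy)).
  assert (g y < 0) by (apply (Hsign y (proj2 Hy)); lra).
  lra.
Qed.

Lemma pos_of_deriv_pos_at_roots (g dg : R -> R) a :
  (forall x, a <= x -> is_derive g x (dg x)) -> 0 <= g a ->
  (forall p, a <= p -> g p = 0 -> 0 < dg p) ->
  forall x, a < x -> 0 < g x.
Proof.
  intros Hd Ha Hroot x Hx.
  assert (Hstart : exists a', a <= a' <= x /\ 0 < g a').
  { destruct Ha as [Ha|Ha]; [exists a; split; [lra|exact Ha]|].
    destruct (is_derive_pos_root_sign g a (dg a)) as [d [Hd0 Hsign]];
      [apply Hd; lra|apply Hroot; [lra|now symmetry]|now symmetry|].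
    exists (a + Rmin d (x - a) / 2).
    assert (0 < Rmin d (x - a) <= d) by (unfold Rmin; destruct Rle_dec; lra).
    split; [unfold Rmin in *; destruct Rle_dec; lra|].
    apply Hsign; [rewrite Rabs_right|]; lra. }
  destruct Hstart as [a' [Ha' Hga']].
  apply (pos_of_deriv_pos_at_first_root g dg a'); [intros; apply Hd; lra|exact Hga'| |lra].
  intros p Hp Hp0 _. apply Hroot; [lra|exact Hp0].
Qed.

Lemma increment_ge_of_deriv_ge (f df : R -> R) a b m : a <= b ->
  (forall x, a <= x <= b -> is_derive f x (df x)) ->
  (forall x, a <= x <= b -> m <= df x) -> f a + m * (b - a) <= f b.
Proof.
  intros Hab Hd Hm.
  destruct (MVT_gen f a b df) as [c [Hc Heq]];
    rewrite ?Rmin_left, ?Rmax_right in * by lra.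
  - intros x Hx. apply Hd. lra.
  - intros x Hx. apply (is_derive_continuity_pt f x (df x)), Hd. lra.
  - assert (m * (b - a) <= df c * (b - a)) by (apply Rmult_le_compat_r; [|apply Hm]; lra).
    lra.
Qed.

Lemma increment_le_of_deriv_le (f df : R -> R) a b m : a <= b ->
  (forall x, a <= x <= b -> is_derive f x (df x)) ->
  (forall x, a <= x <= b -> df x <= m) -> f b <= f a + m * (b - a).
Proof.
  intros Hab Hd Hm.
  assert (H := increment_ge_of_deriv_ge (fun x => - f x) (fun x => - df x) a b (- m) Hab).
  cut (- f a + - m * (b - a) <= - f b); [lra|].
  apply H; intros x Hx; [apply (is_derive_opp f x (df x)), Hd; lra|specialize (Hm x Hx); lra].
Qed.

Lemma nondecreasing_of_deriv_nonneg (f df : R -> R) a b : a <= b ->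
  (forall x, a <= x <= b -> is_derive f x (df x)) ->
  (forall x, a <= x <= b -> 0 <= df x) -> f a <= f b.
Proof.
  intros Hab Hd Hpos.
  assert (H := increment_ge_of_deriv_ge f df a b 0 Hab Hd Hpos). lra.
Qed.

Lemma is_derive_exp_mul (g f : R -> R) x dg df :
  is_derive g x dg -> is_derive f x df ->
  is_derive (fun y => exp (g y) * f y) x (exp (g x) * (dg * f x + df)).
Proof.
  intros Hg Hf.
  assert (He : is_derive (fun y => exp (g y)) x (dg * exp (g x))).
  { apply (is_derive_comp exp g x (exp (g x)) dg); [|exact Hg].
    apply is_derive_Reals, derivable_pt_lim_exp. }
  replace (exp (g x) * (dg * f x + df)) with (dg * exp (g x) * f x + exp (g x) * df) by ring.
  exact (is_derive_mult _ _ x _ _ He Hf Rmult_comm).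
Qed.

Lemma exp_le_compat x y : x <= y -> exp x <= exp y.
Proof. intros [Hlt|Heq]; [left; now apply exp_increasing|right; now rewrite Heq]. Qed.

Lemma pos_of_deriv_ge_linear (w dw : R -> R) C a b : a <= b ->
  (forall x, a <= x <= b -> is_derive w x (dw x)) ->
  (forall x, a <= x <= b -> - C * w x <= dw x) -> 0 < w a -> 0 < w b.
Proof.
  intros Hab Hd Hlow Ha.
  assert (Hmono : exp (C * a) * w a <= exp (C * b) * w b).
  { apply (nondecreasing_of_deriv_nonneg (fun x => exp (C * x) * w x)
             (fun x => exp (C * x) * (C * w x + dw x)) a b Hab).
    - intros x Hx. apply is_derive_exp_mul; [auto_derive; [easy|ring]|apply Hd, Hx].
    - intros x Hx. specialize (Hlow x Hx).
      apply Rmult_le_pos; [left; apply exp_pos|lra]. }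
  pose proof (exp_pos (C * a)). pose proof (exp_pos (C * b)). nra.
Qed.

Lemma gronwall_upper (w dw : R -> R) C K a b : a <= b -> 0 <= C -> 0 <= K -> w a = 0 ->
  (forall x, a <= x <= b -> is_derive w x (dw x)) ->
  (forall x, a <= x <= b -> dw x <= C * w x + K) ->
  w b <= K * (b - a) * exp (C * (b - a)).
Proof.
  intros Hab HC HK Ha Hd Hup.
  set (H x := exp (- C * x) * w x - K * exp (- C * a) * (x - a)).
  assert (Hdec : H b <= H a + 0 * (b - a)).
  { apply (increment_le_of_deriv_le H
      (fun x => exp (- C * x) * (- C * w x + dw x) - K * exp (- C * a)) a b 0 Hab).
    - intros x Hx. apply (is_derive_minus (fun x => exp (- C * x) * w x)).
      + apply is_derive_exp_mul; [auto_derive; [easy|ring]|apply Hd, Hx].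
      + auto_derive; [easy|ring].
    - intros x Hx. specialize (Hup x Hx).
      assert (exp (- C * x) <= exp (- C * a)).
      { apply exp_le_compat. nra. }
      assert (exp (- C * x) * (- C * w x + dw x) <= exp (- C * x) * K).
      { apply Rmult_le_compat_l; [left; apply exp_pos|lra]. }
      nra. }
  unfold H in Hdec. rewrite Ha, Rmult_0_r, Rminus_diag, Rmult_0_r, Rminus_0_r in Hdec.
  assert (Hexp : exp (- C * b) * exp (C * (b - a)) = exp (- C * a)).
  { rewrite <- exp_plus. f_equal. ring. }
  pose proof (exp_pos (- C * b)). pose proof (exp_pos (C * (b - a))).
  apply (Rmult_le_reg_l (exp (- C * b))); [assumption|].
  replace (exp (- C * b) * (K * (b - a) * exp (C * (b - a))))
    with (K * exp (- C * a) * (b - a)) by (rewrite <- Hexp; ring).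
  lra.
Qed.

Lemma glb_approx (S : R -> Prop) : (exists x, S x) -> (exists m, forall x, S x -> m <= x) ->
  exists g, (forall x, S x -> g <= x) /\ forall d, 0 < d -> exists x, S x /\ x < g + d.
Proof.
  intros [x0 Hx0] [m Hm].
  destruct (completeness (fun u => S (- u))) as [s [Hub Hlub]].
  { exists (- m). intros u Hu. specialize (Hm _ Hu). lra. }
  { exists (- x0). now rewrite Ropp_involutive. }
  exists (- s). split.
  - intros x Hx. cut (- x <= s); [lra|]. apply Hub. now rewrite Ropp_involutive.
  - intros d Hd. apply NNPP. intros Hno.
    cut (s <= s - d); [lra|]. apply Hlub. intros u Hu.
    destruct (Rle_lt_dec u (s - d)) as [|Hlt]; [assumption|].
    exfalso. apply Hno. exists (- u). split; [exact Hu|lra].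
Qed.

Lemma Rabs_le_of_between a c x : a <= x <= c -> Rabs x <= Rabs a + Rabs c.
Proof.
  intros Hx. apply Rabs_le.
  pose proof (Rle_abs c). pose proof (Rle_abs (- a)). rewrite Rabs_Ropp in *.
  pose proof (Rabs_pos a). pose proof (Rabs_pos c). lra.
Qed.

Lemma is_derive_sum_sq (f g : R -> R) x df dg :
  is_derive f x df -> is_derive g x dg ->
  is_derive (fun y => f y ^ 2 + g y ^ 2) x (2 * f x * df + 2 * g x * dg).
Proof.
  intros Hf Hg.
  assert (H := is_derive_plus _ _ x _ _ (is_derive_pow f 2 x df Hf) (is_derive_pow g 2 x dg Hg)).
  replace (2 * f x * df + 2 * g x * dg)
    with (INR 2 * df * f x ^ Nat.pred 2 + INR 2 * dg * g x ^ Nat.pred 2) by (simpl; ring).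
  exact H.
Qed.

Lemma riccati_blowup (p dp : R -> R) a l : 2 < l ->
  (forall x, a <= x <= a + l -> is_derive p x (dp x)) ->
  (forall x, a <= x <= a + l -> dp x <= - p x ^ 2 / 2) -> p a <= -1 -> False.
Proof.
  intros Hl Hd Hdp Ha.
  assert (Hneg : forall x, a <= x <= a + l -> p x <= -1).
  { intros x Hx.
    assert (p x <= p a + 0 * (x - a)); [|lra].
    apply (increment_le_of_deriv_le p dp); [lra|intros; apply Hd; lra|].
    intros y Hy. specialize (Hdp y ltac:(lra)). pose proof (pow2_ge_0 (p y)). lra. }
  (* [1 / p] climbs at rate at least 1/2 from [-1] but must stay negative *)
  assert (Hinv : / p a + 1 / 2 * (a + l - a) <= / p (a + l)).
  { apply (increment_ge_of_deriv_ge (fun x => / p x) (fun x => - dp x / p x ^ 2)); [lra| |].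
    - intros x Hx. apply is_derive_inv; [apply Hd, Hx|]. specialize (Hneg x Hx). lra.
    - intros x Hx. specialize (Hneg x Hx). specialize (Hdp x Hx).
      assert (0 < p x ^ 2) by nra.
      apply (Rmult_le_reg_r (p x ^ 2)); [assumption|].
      replace (- dp x / p x ^ 2 * p x ^ 2) with (- dp x) by (field; lra). lra. }
  assert (-1 <= / p a).
  { apply (Rmult_le_reg_r (- p a)); [lra|].
    replace (/ p a * - p a) with (-1) by (field; lra). lra. }
  assert (/ p (a + l) < 0) by (apply Rinv_lt_0_compat; specialize (Hneg (a + l)); lra).
  lra.
Qed.

Lemma sum_f_R0_ge_term (d : nat -> R) N n : (forall i, 0 <= d i) -> (n <= N)%nat ->
  d n <= sum_f_R0 d N.
Proof.
  intros Hd. induction N as [|N IH]; intros Hn.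
  - replace n with 0%nat by lia. simpl. lra.
  - simpl. destruct (Nat.eq_dec n (S N)) as [->|Hne].
    + assert (0 <= sum_f_R0 d N) by (apply cond_pos_sum; auto). lra.
    + assert (d n <= sum_f_R0 d N) by (apply IH; lia). specialize (Hd (S N)). lra.
Qed.

Lemma is_derive_PSeries_shift (a : nat -> R) z0 x :
  Rbar_lt (Rabs (x - z0)) (CV_radius a) ->
  is_derive (fun x => PSeries a (x - z0)) x (PSeries (PS_derive a) (x - z0)).
Proof.
  intros Hx.
  assert (Hshift : is_derive (fun x : R => x - z0) x 1) by (auto_derive; [easy|ring]).
  assert (H := is_derive_comp (PSeries a) (fun x => x - z0) x _ _
                 (is_derive_PSeries a (x - z0) Hx) Hshift).
  replace (PSeries (PS_derive a) (x - z0))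
    with (scal 1 (PSeries (PS_derive a) (x - z0))); [exact H|apply Rmult_1_l].
Qed.

(** * The linear equation phi'' = b x phi' - E phi *)

Section Shooting.

Variables b z0 T : R.
Hypothesis Hb : 0 < b.
Hypothesis HT : 0 < T.

(* Coefficients of y^n, y = x - z0, obtained by matching powers of y in
   phi'' = b (z0 + y) phi' - E phi with phi(z0) = 1 and phi'(z0) = T. *)
Fixpoint coef (E : R) (n : nat) : R :=
  match n with
  | O => 1
  | S O => T
  | S (S m as n1) =>
      (b * z0 * (INR m + 1) * coef E n1 + (b * INR m - E) * coef E m)
      / ((INR m + 1) * (INR m + 2))
  end.

Lemma coef_SS E n : coef E (S (S n)) =
  (b * z0 * (INR n + 1) * coef E (S n) + (b * INR n - E) * coef E n)
  / ((INR n + 1) * (INR n + 2)).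
Proof. reflexivity. Qed.

Lemma coef_SS_abs_le E n :
  Rabs (coef E (S (S n))) * ((INR n + 1) * (INR n + 2)) <=
  b * Rabs z0 * (INR n + 1) * Rabs (coef E (S n)) + (b * INR n + Rabs E) * Rabs (coef E n).
Proof.
  assert (Hn := pos_INR n).
  rewrite <- (Rabs_pos_eq ((INR n + 1) * (INR n + 2))) by nra.
  rewrite <- Rabs_mult, coef_SS.
  replace ((b * z0 * (INR n + 1) * coef E (S n) + (b * INR n - E) * coef E n)
           / ((INR n + 1) * (INR n + 2)) * ((INR n + 1) * (INR n + 2)))
    with (b * z0 * (INR n + 1) * coef E (S n) + (b * INR n - E) * coef E n) by (field; lra).
  eapply Rle_trans; [apply Rabs_triang|]. rewrite !Rabs_mult.
  rewrite (Rabs_pos_eq b), (Rabs_pos_eq (INR n + 1)) by lra.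
  apply Rplus_le_compat_l, Rmult_le_compat_r; [apply Rabs_pos|].
  eapply Rle_trans; [apply Rabs_triang|]. rewrite Rabs_Ropp, Rabs_pos_eq by nra. lra.
Qed.

Lemma coef_step E r n : 0 < r ->
  2 * b * Rabs z0 * r + 2 * (b + Rabs E) * r ^ 2 <= INR n ->
  Rabs (coef E (S (S n))) * r ^ S (S n) <=
  (Rabs (coef E (S n)) * r ^ S n + Rabs (coef E n) * r ^ n) / 2.
Proof.
  intros Hr Hn.
  assert (Hnum := coef_SS_abs_le E n).
  set (x := INR n) in *. assert (Hx : 0 <= x) by apply pos_INR.
  set (a2 := Rabs (coef E (S (S n)))) in *. set (a1 := Rabs (coef E (S n))) in *.
  set (a0 := Rabs (coef E n)) in *.
  assert (Ha1 : 0 <= a1) by apply Rabs_pos. assert (Ha0 : 0 <= a0) by apply Rabs_pos.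
  pose proof (Rabs_pos z0). pose proof (Rabs_pos E).
  set (P := r ^ n). assert (HP : 0 < P) by (apply pow_lt; lra).
  replace (r ^ S (S n)) with (P * r ^ 2) by (unfold P; simpl; ring).
  replace (r ^ S n) with (P * r) by (unfold P; simpl; ring).
  assert (Hr2 : 0 <= r ^ 2) by apply pow2_ge_0.
  assert (0 <= b * Rabs z0 * r) by (repeat apply Rmult_le_pos; lra).
  assert (0 <= (b + Rabs E) * r ^ 2) by (apply Rmult_le_pos; lra).
  assert (Hsmall1 : b * Rabs z0 * r <= (x + 2) / 2) by lra.
  assert (Hsmall0 : (b * x + Rabs E) * r ^ 2 <= (x + 1) * (x + 2) / 2).
  { assert (b * x + Rabs E <= (b + Rabs E) * (x + 1)) by nra.
    apply Rle_trans with ((b + Rabs E) * (x + 1) * r ^ 2); [apply Rmult_le_compat_r; lra|].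
    apply Rle_trans with (x / 2 * (x + 1)); [|nra].
    replace ((b + Rabs E) * (x + 1) * r ^ 2) with ((b + Rabs E) * r ^ 2 * (x + 1)) by ring.
    apply Rmult_le_compat_r; lra. }
  assert (Hterm1 : b * Rabs z0 * (x + 1) * a1 * (P * r ^ 2) <=
                   (x + 1) * (x + 2) / 2 * (a1 * (P * r))).
  { assert (0 <= (x + 1) * a1 * P * r) by (repeat apply Rmult_le_pos; lra). nra. }
  assert (Hterm0 : (b * x + Rabs E) * a0 * (P * r ^ 2) <= (x + 1) * (x + 2) / 2 * (a0 * P)).
  { assert (0 <= a0 * P) by (apply Rmult_le_pos; lra). nra. }
  assert (Hscaled : a2 * ((x + 1) * (x + 2)) * (P * r ^ 2) <=
                    (b * Rabs z0 * (x + 1) * a1 + (b * x + Rabs E) * a0) * (P * r ^ 2)).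
  { apply Rmult_le_compat_r; [nra|exact Hnum]. }
  apply (Rmult_le_reg_r ((x + 1) * (x + 2))); [nra|]. lra.
Qed.

Lemma coef_bounded E r : 0 < r -> exists M, forall n, Rabs (coef E n * r ^ n) <= M.
Proof.
  intros Hr.
  destruct (INR_unbounded (2 * b * Rabs z0 * r + 2 * (b + Rabs E) * r ^ 2)) as [N HN].
  set (d n := Rabs (coef E n) * r ^ n).
  assert (Hd : forall i, 0 <= d i).
  { intros i. apply Rmult_le_pos; [apply Rabs_pos|apply pow_le; lra]. }
  exists (sum_f_R0 d (S N)). intros n.
  rewrite Rabs_mult, (Rabs_pos_eq (r ^ n)) by (apply pow_le; lra). fold (d n).
  induction n as [n IH] using (well_founded_induction Wf_nat.lt_wf).
  destruct (le_lt_dec n (S N)) as [Hn|Hn]; [now apply sum_f_R0_ge_term|].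
  destruct n as [|[|m]]; try lia.
  eapply Rle_trans; [apply coef_step; [exact Hr|]|].
  - apply Rle_trans with (INR N); [lra|]. apply le_INR. lia.
  - assert (d (S m) <= sum_f_R0 d (S N)) by (apply IH; lia).
    assert (d m <= sum_f_R0 d (S N)) by (apply IH; lia).
    unfold d in *. lra.
Qed.

Lemma coef_CV_radius E y : Rbar_lt (Rabs y) (CV_radius (coef E)).
Proof.
  destruct (CV_radius_bounded (coef E)) as [Hub _].
  assert (H : Rbar_le (Rabs y + 1) (CV_radius (coef E))).
  { apply Hub, coef_bounded. pose proof (Rabs_pos y). lra. }
  eapply Rbar_lt_le_trans; [|exact H]. simpl. lra.
Qed.

Lemma PSeries_coef_ode E y :
  PSeries (PS_derive (PS_derive (coef E))) y =
  b * (z0 + y) * PSeries (PS_derive (coef E)) y - E * PSeries (coef E) y.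
Proof.
  set (c := coef E).
  assert (R0 : Rbar_lt (Rabs y) (CV_radius c)) by apply coef_CV_radius.
  assert (R1 : Rbar_lt (Rabs y) (CV_radius (PS_derive c))) by now rewrite CV_radius_derive.
  assert (H0 := PSeries_correct c y (CV_radius_inside _ _ R0)).
  assert (H1 := PSeries_correct _ y (CV_radius_inside _ _ R1)).
  assert (Hz0 := is_pseries_scal (b * z0) _ y _ (Rmult_comm _ _) H1).
  assert (Hy := is_pseries_scal b _ y _ (Rmult_comm _ _) (is_pseries_incr_1 _ _ _ H1)).
  assert (HE := is_pseries_scal (- E) _ y _ (Rmult_comm _ _) H0).
  assert (Hsum := is_pseries_plus _ _ _ _ _ Hz0 (is_pseries_plus _ _ _ _ _ Hy HE)).
  replace (b * (z0 + y) * PSeries (PS_derive c) y - E * PSeries c y) with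
    (plus (scal (b * z0) (PSeries (PS_derive c) y))
       (plus (scal b (scal y (PSeries (PS_derive c) y))) (scal (- E) (PSeries c y))))
    by (unfold plus, scal; simpl; unfold mult; simpl; ring).
  apply is_pseries_unique. eapply is_pseries_ext; [|exact Hsum].
  intros n. unfold PS_plus, PS_scal, PS_incr_1, PS_derive, plus, scal, zero; simpl.
  unfold mult; simpl.
  unfold c. rewrite coef_SS.
  destruct n as [|m]; [simpl; field|].
  change (match m with 0%nat => 1 | S _ => INR m + 1 end) with (INR (S m)).
  rewrite !S_INR. field. pose proof (pos_INR m). lra.
Qed.

Definition phi E x := PSeries (coef E) (x - z0).
Definition dphi E x := PSeries (PS_derive (coef E)) (x - z0).

Lemma phi_derive E x : is_derive (phi E) x (dphi E x).
Proof. apply is_derive_PSeries_shift, coef_CV_radius. Qed.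

Lemma dphi_derive E x : is_derive (dphi E) x (b * x * dphi E x - E * phi E x).
Proof.
  replace (b * x * dphi E x - E * phi E x)
    with (PSeries (PS_derive (PS_derive (coef E))) (x - z0))
    by (rewrite PSeries_coef_ode; unfold dphi, phi; f_equal; f_equal; ring).
  apply is_derive_PSeries_shift. rewrite CV_radius_derive. apply coef_CV_radius.
Qed.

Lemma phi_z0 E : phi E z0 = 1.
Proof. unfold phi. now rewrite Rminus_diag, PSeries_0. Qed.

Lemma dphi_z0 E : dphi E z0 = T.
Proof. unfold dphi. rewrite Rminus_diag, PSeries_0. unfold PS_derive. simpl. ring. Qed.

Lemma phi_continuity_pt E x : continuity_pt (phi E) x.
Proof. exact (is_derive_continuity_pt _ _ _ (phi_derive E x)). Qed.

Lemma dphi_continuity_pt E x : continuity_pt (dphi E) x.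
Proof. exact (is_derive_continuity_pt _ _ _ (dphi_derive E x)). Qed.

(** * Shooting in the energy *)

Lemma energy_bound x E u w M : Rabs x <= M ->
  Rabs (2 * u * w + 2 * w * (b * x * w - E * u)) <= (1 + 2 * b * M + Rabs E) * (u ^ 2 + w ^ 2).
Proof.
  intros Hx.
  assert (Huw : 2 * Rabs (u * w) <= u ^ 2 + w ^ 2).
  { rewrite Rabs_mult, <- (pow2_abs u), <- (pow2_abs w).
    pose proof (pow2_ge_0 (Rabs u - Rabs w)). nra. }
  pose proof (pow2_ge_0 u). pose proof (pow2_ge_0 w). pose proof (Rabs_pos x).
  assert (Hcross : Rabs (2 * (u * w)) <= u ^ 2 + w ^ 2).
  { rewrite Rabs_mult, Rabs_pos_eq by lra. lra. }
  assert (Hdrift : Rabs (2 * b * x * w ^ 2) <= 2 * b * M * (u ^ 2 + w ^ 2)).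
  { rewrite !Rabs_mult, (Rabs_pos_eq 2), (Rabs_pos_eq b), (Rabs_pos_eq (w ^ 2)) by lra.
    assert (b * Rabs x * w ^ 2 <= b * M * w ^ 2).
    { apply Rmult_le_compat_r; [lra|apply Rmult_le_compat_l; lra]. }
    assert (0 <= b * M * u ^ 2) by (apply Rmult_le_pos; [apply Rmult_le_pos|]; lra).
    lra. }
  assert (Hpot : Rabs (E * (2 * (u * w))) <= Rabs E * (u ^ 2 + w ^ 2)).
  { rewrite Rabs_mult. apply Rmult_le_compat_l; [apply Rabs_pos|exact Hcross]. }
  replace (2 * u * w + 2 * w * (b * x * w - E * u))
    with (2 * (u * w) + 2 * b * x * w ^ 2 + - (E * (2 * (u * w)))) by ring.
  eapply Rle_trans; [apply Rabs_triang|]. rewrite Rabs_Ropp.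
  eapply Rle_trans; [apply Rplus_le_compat_r, Rabs_triang|]. lra.
Qed.

Lemma phi_dphi_not_both_zero E z : z0 <= z -> phi E z = 0 -> dphi E z = 0 -> False.
Proof.
  intros Hz H0 H1.
  set (M := Rabs z0 + Rabs z).
  assert (Hw : 0 < phi E z ^ 2 + dphi E z ^ 2).
  { apply (pos_of_deriv_ge_linear (fun x => phi E x ^ 2 + dphi E x ^ 2)
      (fun x => 2 * phi E x * dphi E x + 2 * dphi E x * (b * x * dphi E x - E * phi E x))
      (1 + 2 * b * M + Rabs E) z0 z Hz).
    - intros x _. apply is_derive_sum_sq; [apply phi_derive|apply dphi_derive].
    - intros x Hx.
      assert (Hbound := energy_bound x E (phi E x) (dphi E x) M (Rabs_le_of_between _ _ _ Hx)).
      apply Rabs_le_between in Hbound. lra.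
    - rewrite phi_z0, dphi_z0. nra. }
  rewrite H0, H1 in Hw. lra.
Qed.

Lemma phi_pos_of_nonneg E :
  (forall x, z0 <= x -> 0 <= phi E x) -> forall x, z0 <= x -> 0 < phi E x.
Proof.
  intros Hnn x Hx. destruct (Hnn x Hx) as [|Hzero]; [assumption|exfalso].
  assert (Hxz : z0 < x).
  { destruct (Req_dec x z0) as [->|]; [rewrite phi_z0 in Hzero; lra|lra]. }
  apply (phi_dphi_not_both_zero E x); [lra|auto|].
  apply (is_derive_local_min (phi E) x _ (x - z0) (phi_derive E x)); [lra|].
  intros y Hy. rewrite <- Hzero. apply Hnn. apply Rabs_def2 in Hy. lra.
Qed.

Lemma phi_nondecreasing E : (forall x, z0 <= x -> 0 <= dphi E x) ->
  forall x y, z0 <= x -> x <= y -> phi E x <= phi E y.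
Proof.
  intros Hd x y Hx Hxy.
  apply (nondecreasing_of_deriv_nonneg (phi E) (dphi E)); [lra|intros; apply phi_derive|].
  intros t Ht. apply Hd. lra.
Qed.

Lemma dphi_pos_of_E_nonpos E : E <= 0 -> forall x, z0 <= x -> 0 < dphi E x.
Proof.
  intros HE x Hx. destruct (Rlt_le_dec 0 (dphi E x)) as [|Hle]; [assumption|exfalso].
  destruct (first_root (dphi E) z0 x Hx) as [p [Hp [Hp0 Hbefore]]];
    [intros; apply dphi_continuity_pt|rewrite dphi_z0; exact HT|exact Hle|].
  assert (Hphi : forall y, z0 <= y <= p -> 1 <= phi E y).
  { intros y Hy. rewrite <- (phi_z0 E).
    apply (nondecreasing_of_deriv_nonneg (phi E) (dphi E)); [lra|intros; apply phi_derive|].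
    intros t Ht. destruct (Req_dec t p) as [->|]; [lra|]. left; apply Hbefore; lra. }
  (* [exp (- b x^2 / 2) phi'] has derivative [- E exp (- b x^2 / 2) phi >= 0] *)
  assert (Hmono : exp (- b / 2 * z0 ^ 2) * dphi E z0 <= exp (- b / 2 * p ^ 2) * dphi E p).
  { apply (nondecreasing_of_deriv_nonneg (fun y => exp (- b / 2 * y ^ 2) * dphi E y)
      (fun y => exp (- b / 2 * y ^ 2) * (- (b * y) * dphi E y + (b * y * dphi E y - E * phi E y))));
      [lra| |].
    - intros y _. apply (is_derive_exp_mul (fun y => - b / 2 * y ^ 2) (dphi E));
        [auto_derive; [easy|simpl; field]|apply dphi_derive].
    - intros y Hy. specialize (Hphi y Hy).
      apply Rmult_le_pos; [left; apply exp_pos|nra]. }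
  rewrite Hp0, dphi_z0 in Hmono. pose proof (exp_pos (- b / 2 * z0 ^ 2)). nra.
Qed.

Definition crosses E := exists x, z0 <= x /\ phi E x < 0.

Lemma crosses_pos E : crosses E -> 0 < E.
Proof.
  intros [x [Hx Hneg]]. destruct (Rlt_le_dec 0 E) as [|HE]; [assumption|exfalso].
  assert (Hmono := phi_nondecreasing E (fun y Hy => Rlt_le _ _ (dphi_pos_of_E_nonpos E HE y Hy))
                     z0 x (Rle_refl z0) Hx).
  rewrite phi_z0 in Hmono. lra.
Qed.

(* [excess E x] has the sign of [(exp (- b x^2 / 4) phi)'] *)
Definition excess E x := dphi E x - b * x / 2 * phi E x.

Lemma excess_derive E x :
  is_derive (excess E) x ((b ^ 2 * x ^ 2 / 4 - E - b / 2) * phi E x + b * x / 2 * excess E x).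
Proof.
  assert (H := is_derive_minus _ _ x _ _ (dphi_derive E x)
                 (is_derive_mult (fun y => b * y / 2) (phi E) x (b / 2) _
                    ltac:(auto_derive; [easy|field]) (phi_derive E x) Rmult_comm)).
  replace ((b ^ 2 * x ^ 2 / 4 - E - b / 2) * phi E x + b * x / 2 * excess E x)
    with (minus (b * x * dphi E x - E * phi E x)
                (plus (mult (b / 2) (phi E x)) (mult (b * x / 2) (dphi E x))))
    by (unfold excess, minus, plus, opp, mult; simpl; field).
  exact H.
Qed.

Lemma phi_tilted_derive E x :
  is_derive (fun y => exp (- b / 4 * y ^ 2) * phi E y) x (exp (- b / 4 * x ^ 2) * excess E x).
Proof.
  replace (exp (- b / 4 * x ^ 2) * excess E x)
    with (exp (- b / 4 * x ^ 2) * (- (b * x / 2) * phi E x + dphi E x)) by (unfold excess; ring).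
  apply (is_derive_exp_mul (fun y => - b / 4 * y ^ 2) (phi E));
    [auto_derive; [easy|simpl; field]|apply phi_derive].
Qed.

Lemma phi_pos_of_excess_nonneg E z1 x : z1 <= x -> 0 < phi E z1 ->
  (forall y, z1 <= y <= x -> 0 <= excess E y) -> 0 < phi E x.
Proof.
  intros Hx Hz1 Hex.
  assert (Hmono : exp (- b / 4 * z1 ^ 2) * phi E z1 <= exp (- b / 4 * x ^ 2) * phi E x).
  { apply (nondecreasing_of_deriv_nonneg _ _ z1 x Hx (fun y _ => phi_tilted_derive E y)).
    intros y Hy. apply Rmult_le_pos; [left; apply exp_pos|apply Hex, Hy]. }
  pose proof (exp_pos (- b / 4 * z1 ^ 2)). pose proof (exp_pos (- b / 4 * x ^ 2)).
  destruct (Rlt_le_dec 0 (phi E x)); [assumption|nra].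
Qed.

Lemma phi_pos_of_trapped E z1 : 0 < z1 -> E + b / 2 < b ^ 2 * z1 ^ 2 / 4 ->
  0 < phi E z1 -> 0 < excess E z1 -> forall x, z1 <= x -> 0 < phi E x.
Proof.
  intros Hz1 Hgap Hphi Hex.
  assert (Hpos : forall x, z1 <= x -> 0 < excess E x).
  { apply (pos_of_deriv_pos_at_first_root _ _ z1 (fun x _ => excess_derive E x) Hex).
    intros p Hp Hp0 Hbefore. rewrite Hp0, Rmult_0_r, Rplus_0_r.
    assert (0 < phi E p).
    { apply (phi_pos_of_excess_nonneg E z1); [lra|exact Hphi|].
      intros y Hy. destruct (Req_dec y p) as [->|]; [lra|]. left; apply Hbefore; lra. }
    assert (b ^ 2 * z1 ^ 2 <= b ^ 2 * p ^ 2) by (apply Rmult_le_compat_l; nra).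
    apply Rmult_lt_0_compat; lra. }
  intros x Hx. apply (phi_pos_of_excess_nonneg E z1 x Hx Hphi).
  intros y Hy. left. apply Hpos. lra.
Qed.

Lemma phi_diff_sq_le E E0 x M G : z0 <= x ->
  (forall y, z0 <= y <= x -> Rabs y <= M /\ Rabs (phi E0 y) <= G) ->
  (phi E x - phi E0 x) ^ 2 + (dphi E x - dphi E0 x) ^ 2 <=
  (E - E0) ^ 2 * G ^ 2 * (x - z0) * exp ((2 + 2 * b * M + Rabs E) * (x - z0)).
Proof.
  intros Hx Hbounds.
  set (u y := phi E y - phi E0 y). set (w y := dphi E y - dphi E0 y).
  assert (HM : 0 <= M) by (destruct (Hbounds z0) as [HM _]; [lra|]; pose proof (Rabs_pos z0); lra).
  apply (gronwall_upper (fun y => u y ^ 2 + w y ^ 2)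
    (fun y => 2 * u y * w y + 2 * w y * (b * y * w y - E * u y - (E - E0) * phi E0 y)));
    [lra|pose proof (Rabs_pos E); pose proof (Rmult_le_pos b M ltac:(lra) HM); lra
    |apply Rmult_le_pos; apply pow2_ge_0|unfold u, w; rewrite !phi_z0, !dphi_z0; ring| |].
  - intros y _. apply is_derive_sum_sq.
    + exact (is_derive_minus _ _ y _ _ (phi_derive E y) (phi_derive E0 y)).
    + replace (b * y * w y - E * u y - (E - E0) * phi E0 y)
        with (minus (b * y * dphi E y - E * phi E y) (b * y * dphi E0 y - E0 * phi E0 y))
        by (unfold u, w, minus, plus, opp; simpl; ring).
      exact (is_derive_minus _ _ y _ _ (dphi_derive E y) (dphi_derive E0 y)).
  - intros y Hy. destruct (Hbounds y Hy) as [HyM HyG].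
    assert (Henergy := energy_bound y E (u y) (w y) M HyM). apply Rabs_le_between in Henergy.
    assert (Hforce : - 2 * w y * ((E - E0) * phi E0 y) <= w y ^ 2 + (E - E0) ^ 2 * G ^ 2).
    { assert (phi E0 y ^ 2 <= G ^ 2).
      { rewrite <- (pow2_abs (phi E0 y)). pose proof (Rabs_pos (phi E0 y)). nra. }
      pose proof (pow2_ge_0 (w y + (E - E0) * phi E0 y)). pose proof (pow2_ge_0 (E - E0)). nra. }
    pose proof (pow2_ge_0 (u y)). lra.
Qed.

Lemma phi_diff_sq_bound E0 Z : z0 <= Z -> exists K, 0 <= K /\
  forall E, Rabs (E - E0) < 1 -> forall x, z0 <= x <= Z ->
    (phi E x - phi E0 x) ^ 2 + (dphi E x - dphi E0 x) ^ 2 <= (E - E0) ^ 2 * K.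
Proof.
  intros HZ.
  destruct (continuity_ab_maj (fun y => Rabs (phi E0 y)) z0 Z HZ) as [xm [Hmax _]].
  { intros y _.
    apply (continuity_pt_comp (phi E0) Rabs y (phi_continuity_pt E0 y)), Rcontinuity_abs. }
  set (G := Rabs (phi E0 xm)). set (M := Rabs z0 + Rabs Z).
  set (C := 3 + 2 * b * M + Rabs E0).
  assert (HM : 0 <= M) by (unfold M; pose proof (Rabs_pos z0); pose proof (Rabs_pos Z); lra).
  pose proof (pow2_ge_0 G). pose proof (Rmult_le_pos b M ltac:(lra) HM).
  exists (G ^ 2 * (Z - z0) * exp (C * (Z - z0))). split.
  { apply Rmult_le_pos; [apply Rmult_le_pos; lra|left; apply exp_pos]. }
  intros E HE x Hx.
  assert (HEabs : Rabs E <= Rabs E0 + 1).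
  { replace E with (E0 + (E - E0)) by ring. eapply Rle_trans; [apply Rabs_triang|lra]. }
  eapply Rle_trans; [apply (phi_diff_sq_le E E0 x M G (proj1 Hx))|].
  { intros y Hy. split; [apply Rabs_le_of_between; lra|apply Hmax; lra]. }
  rewrite !Rmult_assoc. apply Rmult_le_compat_l; [apply pow2_ge_0|].
  rewrite <- !Rmult_assoc. pose proof (Rabs_pos E).
  apply Rmult_le_compat;
    [apply Rmult_le_pos; lra|left; apply exp_pos|apply Rmult_le_compat_l; lra|].
  apply exp_le_compat. unfold C. apply Rmult_le_compat; lra.
Qed.

Lemma phi_close E0 Z e : z0 <= Z -> 0 < e ->
  exists d, 0 < d /\ forall E, Rabs (E - E0) < d -> forall x, z0 <= x <= Z ->
    Rabs (phi E x - phi E0 x) < e /\ Rabs (dphi E x - dphi E0 x) < e.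
Proof.
  intros HZ He.
  destruct (phi_diff_sq_bound E0 Z HZ) as [K [HK Hbound]].
  exists (Rmin 1 (e / (K + 1))). split.
  { apply Rmin_pos; [lra|apply Rdiv_lt_0_compat; lra]. }
  intros E HE x Hx.
  assert (HEe : Rabs (E - E0) * (K + 1) < e).
  { apply (Rmult_lt_reg_r (/ (K + 1))); [apply Rinv_0_lt_compat; lra|].
    rewrite Rmult_assoc, Rinv_r, Rmult_1_r by lra.
    eapply Rlt_le_trans; [exact HE|apply Rmin_r]. }
  assert (Hsmall : (E - E0) ^ 2 * K < e ^ 2).
  { rewrite <- (pow2_abs (E - E0)). pose proof (Rabs_pos (E - E0)).
    assert (Rabs (E - E0) ^ 2 * K <= (Rabs (E - E0) * (K + 1)) ^ 2) by nra.
    assert (0 <= Rabs (E - E0) * (K + 1)) by nra.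
    nra. }
  assert (Hw := Hbound E ltac:(eapply Rlt_le_trans; [exact HE|apply Rmin_l]) x Hx).
  pose proof (pow2_ge_0 (phi E x - phi E0 x)). pose proof (pow2_ge_0 (dphi E x - dphi E0 x)).
  split; apply Rabs_def1; nra.
Qed.

Lemma crosses_open E0 : crosses E0 -> exists d, 0 < d /\ forall E, Rabs (E - E0) < d -> crosses E.
Proof.
  intros [x [Hx Hneg]].
  destruct (phi_close E0 x (- phi E0 x) Hx ltac:(lra)) as [d [Hd Hclose]].
  exists d. split; [exact Hd|]. intros E HE. exists x. split; [exact Hx|].
  destruct (Hclose E HE x ltac:(lra)) as [Hphi _]. apply Rabs_def2 in Hphi. lra.
Qed.

Lemma not_crosses_near_trap E0 z1 : 0 < z1 -> z0 <= z1 -> E0 + b / 2 < b ^ 2 * z1 ^ 2 / 4 ->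
  (forall x, z0 <= x <= z1 -> 1 <= phi E0 x) -> 0 < excess E0 z1 ->
  exists d, 0 < d /\ forall E, Rabs (E - E0) < d -> ~ crosses E.
Proof.
  intros Hz1 Hz Hgap Hphi Hex.
  set (L := 1 + b * z1 / 2).
  assert (HL : 0 < L) by (unfold L; nra).
  set (e := Rmin (1 / 2) (excess E0 z1 / (2 * L))).
  assert (He : 0 < e) by (apply Rmin_pos; [lra|apply Rdiv_lt_0_compat; lra]).
  assert (HeL : e * L <= excess E0 z1 / 2).
  { apply (Rmult_le_reg_r (/ L)); [apply Rinv_0_lt_compat; lra|].
    rewrite Rmult_assoc, Rinv_r, Rmult_1_r by lra.
    replace (excess E0 z1 / 2 * / L) with (excess E0 z1 / (2 * L)) by (field; lra).
    apply Rmin_r. }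
  destruct (phi_close E0 z1 e Hz He) as [d [Hd Hclose]].
  exists (Rmin d (b ^ 2 * z1 ^ 2 / 4 - E0 - b / 2)). split; [apply Rmin_pos; lra|].
  intros E HE [x [Hx Hneg]].
  assert (HEd : Rabs (E - E0) < d) by (eapply Rlt_le_trans; [exact HE|apply Rmin_l]).
  assert (HEgap : E + b / 2 < b ^ 2 * z1 ^ 2 / 4).
  { assert (Hclose_gap : Rabs (E - E0) < b ^ 2 * z1 ^ 2 / 4 - E0 - b / 2)
      by (eapply Rlt_le_trans; [exact HE|apply Rmin_r]).
    apply Rabs_def2 in Hclose_gap. lra. }
  assert (Hphi_pos : forall y, z0 <= y <= z1 -> 0 < phi E y).
  { intros y Hy. destruct (Hclose E HEd y Hy) as [Hy1 _]. apply Rabs_def2 in Hy1.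
    specialize (Hphi y Hy). assert (e <= 1 / 2) by apply Rmin_l. lra. }
  assert (Hex_pos : 0 < excess E z1).
  { destruct (Hclose E HEd z1 ltac:(lra)) as [Hphi1 Hdphi1].
    apply Rabs_def2 in Hphi1, Hdphi1.
    assert (Hb2 : 0 < b * z1 / 2) by nra.
    assert (Hdrift : Rabs (b * z1 / 2 * (phi E z1 - phi E0 z1)) <= b * z1 / 2 * e).
    { rewrite Rabs_mult, Rabs_pos_eq by lra. apply Rmult_le_compat_l; [lra|]. apply Rabs_le; lra. }
    apply Rabs_le_between in Hdrift.
    unfold excess in *. unfold L in HeL. nra. }
  destruct (Rle_lt_dec x z1) as [Hxz1|Hxz1].
  - specialize (Hphi_pos x (conj Hx Hxz1)). lra.
  - assert (0 < phi E x); [|lra].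
    apply (phi_pos_of_trapped E z1 Hz1 HEgap (Hphi_pos z1 ltac:(lra)) Hex_pos). lra.
Qed.

Lemma no_trap_at_infimum E0 : (forall d, 0 < d -> exists E, crosses E /\ Rabs (E - E0) < d) ->
  (forall x, z0 <= x -> 0 <= dphi E0 x) ->
  forall x, z0 <= x -> 0 < x -> E0 + b / 2 < b ^ 2 * x ^ 2 / 4 -> excess E0 x <= 0.
Proof.
  intros Happrox Hd x Hx Hx0 Hgap. destruct (Rle_lt_dec (excess E0 x) 0) as [|Hex]; [assumption|].
  destruct (not_crosses_near_trap E0 x Hx0 Hx Hgap) as [d [Hdpos Hnot]]; [|exact Hex|].
  { intros y Hy. rewrite <- (phi_z0 E0). apply phi_nondecreasing; [exact Hd|lra|lra]. }
  destruct (Happrox d Hdpos) as [E [HE HEd]]. exfalso. exact (Hnot E HEd HE).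
Qed.

Definition psi E x := dphi E x / phi E x.
Definition dpsi E x := b * x * psi E x - E - psi E x ^ 2.

Lemma psi_derive E x : phi E x <> 0 -> is_derive (psi E) x (dpsi E x).
Proof.
  intros Hx.
  assert (H := is_derive_div _ _ x _ _ (dphi_derive E x) (phi_derive E x) Hx).
  replace (dpsi E x) with ((mult (b * x * dphi E x - E * phi E x) (phi E x)
                            - mult (dphi E x) (dphi E x)) / (phi E x ^ 2))
    by (unfold dpsi, psi, mult; simpl; field; exact Hx).
  exact H.
Qed.

Lemma dpsi_derive E x : phi E x <> 0 ->
  is_derive (dpsi E) x (b * psi E x + (b * x - 2 * psi E x) * dpsi E x).
Proof.
  intros Hx. assert (Hp := psi_derive E x Hx).
  assert (H := is_derive_minus _ _ x _ _
    (is_derive_minus _ _ x _ _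
       (is_derive_mult (fun t => b * t) (psi E) x b _ ltac:(auto_derive; [easy|ring]) Hp Rmult_comm)
       (is_derive_const E x))
    (is_derive_pow (psi E) 2 x _ Hp)).
  replace (b * psi E x + (b * x - 2 * psi E x) * dpsi E x)
    with (minus (minus (plus (mult b (psi E x)) (mult (b * x) (dpsi E x))) zero)
                (INR 2 * dpsi E x * psi E x ^ Nat.pred 2))
    by (unfold minus, plus, opp, mult, zero; simpl; ring).
  exact H.
Qed.

Lemma crosses_large_E : crosses (b ^ 2 * (Rabs z0 + T + 4) ^ 2 / 2 + 1).
Proof.
  set (E := b ^ 2 * (Rabs z0 + T + 4) ^ 2 / 2 + 1).
  assert (HE : E = b ^ 2 * (Rabs z0 + T + 4) ^ 2 / 2 + 1) by reflexivity. clearbody E.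
  apply NNPP. intros Hnot.
  assert (Hpos : forall x, z0 <= x -> 0 < phi E x).
  { apply phi_pos_of_nonneg. intros x Hx.
    destruct (Rle_lt_dec 0 (phi E x)) as [|Hneg]; [assumption|].
    exfalso. apply Hnot. exists x. split; assumption. }
  assert (Hd : forall x, z0 <= x -> is_derive (psi E) x (dpsi E x)).
  { intros x Hx. apply psi_derive. specialize (Hpos x Hx). lra. }
  (* [b x psi <= psi^2/2 + b^2 x^2/2], and [E] exceeds [b^2 x^2/2 + 1] there *)
  assert (Hfall : forall x, z0 <= x <= z0 + T + 4 -> dpsi E x <= - psi E x ^ 2 / 2 - 1).
  { intros x Hx. unfold dpsi.
    assert (Habs : Rabs x <= Rabs z0 + T + 4).
    { apply Rabs_le. pose proof (Rle_abs z0). pose proof (Rle_abs (- z0)).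
      rewrite Rabs_Ropp in *. lra. }
    assert (x ^ 2 <= (Rabs z0 + T + 4) ^ 2).
    { rewrite <- (pow2_abs x). pose proof (Rabs_pos x). nra. }
    pose proof (pow2_ge_0 (psi E x - b * x)).
    assert (b ^ 2 * x ^ 2 <= b ^ 2 * (Rabs z0 + T + 4) ^ 2) by (apply Rmult_le_compat_l; nra).
    lra. }
  assert (Hpsi_z0 : psi E z0 = T) by (unfold psi; rewrite phi_z0, dphi_z0; field).
  assert (Hdrop : psi E (z0 + T + 1) <= psi E z0 + -1 * (z0 + T + 1 - z0)).
  { apply (increment_le_of_deriv_le (psi E) (dpsi E)); [lra|intros; apply Hd; lra|].
    intros x Hx. specialize (Hfall x ltac:(lra)). pose proof (pow2_ge_0 (psi E x)). lra. }
  apply (riccati_blowup (psi E) (dpsi E) (z0 + T + 1) 3); [lra|intros; apply Hd; lra| |lra].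
  intros x Hx. specialize (Hfall x ltac:(lra)). lra.
Qed.

Definition ztail E := 1 + Rabs z0 + 4 * (E + b) / b ^ 2.

Lemma ztail_spec E x : 0 <= E -> ztail E <= x ->
  z0 <= x /\ 1 <= x /\ E + b / 2 < b ^ 2 * x ^ 2 / 4.
Proof.
  intros HE Hx. unfold ztail in Hx.
  pose proof (Rle_abs z0). pose proof (Rabs_pos z0).
  assert (Hq : b ^ 2 * (4 * (E + b) / b ^ 2) = 4 * (E + b)) by (field; lra).
  assert (0 <= 4 * (E + b) / b ^ 2) by (apply Rdiv_le_0_compat; nra).
  assert (b ^ 2 * (4 * (E + b) / b ^ 2) <= b ^ 2 * x) by (apply Rmult_le_compat_l; nra).
  assert (b ^ 2 * x <= b ^ 2 * x ^ 2) by (apply Rmult_le_compat_l; nra).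
  repeat split; lra.
Qed.

Lemma psi_pos E x : 0 < phi E x -> 0 < dphi E x -> 0 < psi E x.
Proof. intros Hphi Hdphi. now apply Rdiv_lt_0_compat. Qed.

Lemma psi_gap_persists E x2 : 0 < x2 ->
  (forall y, x2 <= y -> 0 < phi E y /\ 0 < psi E y /\ psi E y <= b * y / 2) ->
  0 < b * x2 / 2 * psi E x2 - E ->
  forall y, x2 <= y -> psi E x2 <= psi E y /\ b * y / 2 * psi E x2 - E <= dpsi E y.
Proof.
  intros Hx2 Hy Hgap.
  set (g y := b * y / 2 * psi E y - E).
  assert (Hd : forall y, x2 <= y -> is_derive (psi E) y (dpsi E y)).
  { intros y Hxy. apply psi_derive. destruct (Hy y Hxy) as [? _]. lra. }
  (* [psi' = psi (b y - psi) - E >= g] because [psi <= b y / 2] *)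
  assert (Hdpsi_g : forall y, x2 <= y -> g y <= dpsi E y).
  { intros y Hxy. destruct (Hy y Hxy) as [_ [Hpsi Hhalf]]. unfold g, dpsi. nra. }
  assert (Hg : forall y, x2 <= y -> 0 < g y).
  { intros y Hxy. destruct (Req_dec y x2) as [->|Hne]; [exact Hgap|].
    apply (pos_of_deriv_pos_at_roots g (fun y => b / 2 * psi E y + b * y / 2 * dpsi E y) x2);
      [|left; exact Hgap| |lra].
    - intros t Ht. unfold g.
      assert (H := is_derive_minus _ _ t _ _
        (is_derive_mult (fun y => b * y / 2) (psi E) t (b / 2) _
           ltac:(auto_derive; [easy|field]) (Hd t Ht) Rmult_comm)
        (is_derive_const E t)).
      replace (b / 2 * psi E t + b * t / 2 * dpsi E t)
        with (minus (plus (mult (b / 2) (psi E t)) (mult (b * t / 2) (dpsi E t))) zero)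
        by (unfold minus, plus, opp, mult, zero; simpl; ring).
      exact H.
    - intros p Hp Hp0. assert (Hdp := Hdpsi_g p Hp). destruct (Hy p Hp) as [_ [Hpsi _]].
      assert (0 <= b * p / 2 * dpsi E p) by (apply Rmult_le_pos; [nra|lra]). nra. }
  intros y Hxy.
  assert (Hmono : psi E x2 <= psi E y).
  { apply (nondecreasing_of_deriv_nonneg (psi E) (dpsi E)); [lra|intros; apply Hd; lra|].
    intros t Ht. specialize (Hdpsi_g t ltac:(lra)). specialize (Hg t ltac:(lra)). lra. }
  split; [exact Hmono|].
  specialize (Hdpsi_g y Hxy). unfold g in Hdpsi_g.
  assert (b * y / 2 * psi E x2 <= b * y / 2 * psi E y) by (apply Rmult_le_compat_l; nra).
  lra.
Qed.

Lemma psi_le_of_no_trap E : 0 <= E ->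
  (forall x, z0 <= x -> 0 < phi E x) -> (forall x, z0 <= x -> 0 < dphi E x) ->
  (forall x, ztail E <= x -> excess E x <= 0) ->
  forall x, ztail E <= x -> psi E x <= 2 * E / (b * x).
Proof.
  intros HE Hphi Hdphi Hno x2 Hx2.
  destruct (ztail_spec E x2 HE Hx2) as [Hx2z0 [Hx21 _]].
  assert (Hy : forall y, x2 <= y -> 0 < phi E y /\ 0 < psi E y /\ psi E y <= b * y / 2).
  { intros y Hxy. assert (Hp := Hphi y ltac:(lra)).
    repeat split; [exact Hp|apply psi_pos; [|apply Hdphi]; lra|].
    specialize (Hno y ltac:(lra)). unfold excess in Hno. unfold psi.
    apply (Rmult_le_reg_r (phi E y)); [exact Hp|].
    replace (dphi E y / phi E y * phi E y) with (dphi E y) by (field; lra). lra. }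
  destruct (Rle_lt_dec (psi E x2) (2 * E / (b * x2))) as [|Hbig]; [assumption|exfalso].
  set (s := psi E x2) in *.
  assert (Hs : 0 < s) by (apply Hy; lra).
  assert (Hgap : 0 < b * x2 / 2 * s - E).
  { assert (2 * E < s * (b * x2)); [|lra].
    apply (Rmult_lt_compat_r (b * x2)) in Hbig; [|nra].
    replace (2 * E / (b * x2) * (b * x2)) with (2 * E) in Hbig by (field; lra). lra. }
  assert (Hgrowth := psi_gap_persists E x2 ltac:(lra) Hy Hgap). fold s in Hgrowth.
  set (x3 := x2 + 2 * (E + b) / (s * b)).
  assert (Hx3 : 2 * (E + b) / (s * b) <= x3 - x2 /\ 0 <= 2 * (E + b) / (s * b)).
  { split; [unfold x3; lra|]. apply Rdiv_le_0_compat; nra. }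
  (* beyond [x3] the slope of [psi] is at least [b], so [psi] overtakes [b y / 2] *)
  assert (Hclimb : psi E x3 + b * (2 * x3 + 1 - x3) <= psi E (2 * x3 + 1)).
  { apply (increment_ge_of_deriv_ge (psi E) (dpsi E)); [lra| |].
    - intros y Hxy. apply psi_derive. destruct (Hy y ltac:(lra)) as [? _]. lra.
    - intros y Hxy. destruct (Hgrowth y ltac:(lra)) as [_ Hslope].
      assert (Hq : s * b * (2 * (E + b) / (s * b)) = 2 * (E + b)) by (field; nra).
      assert (Hle : s * b * (2 * (E + b) / (s * b)) <= s * b * y)
        by (apply Rmult_le_compat_l; [nra|lra]).
      lra. }
  destruct (Hgrowth x3 ltac:(lra)) as [Hs3 _].
  destruct (Hy (2 * x3 + 1) ltac:(lra)) as [_ [_ Hhalf]].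
  lra.
Qed.

Lemma dphi_neg_after E p : 0 < E -> (forall x, z0 <= x -> 0 < phi E x) ->
  z0 <= p -> dphi E p <= 0 -> forall x, p < x -> dphi E x < 0.
Proof.
  intros HE Hphi Hp Hdp x Hx.
  cut (0 < - dphi E x); [lra|].
  apply (pos_of_deriv_pos_at_roots (fun y => - dphi E y)
           (fun y => - (b * y * dphi E y - E * phi E y)) p); [|lra| |exact Hx].
  - intros y _. apply (is_derive_opp (dphi E)), dphi_derive.
  - intros q Hq Hq0. replace (dphi E q) with 0 by lra.
    specialize (Hphi q ltac:(lra)). nra.
Qed.

Lemma dphi_pos_of_phi_pos E : 0 < E -> (forall x, z0 <= x -> 0 < phi E x) ->
  forall x, z0 <= x -> 0 < dphi E x.
Proof.
  intros HE Hphi x Hx. destruct (Rlt_le_dec 0 (dphi E x)) as [|Hle]; [assumption|exfalso].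
  assert (Hneg := dphi_neg_after E x HE Hphi Hx Hle).
  set (x0 := Rmax x 0 + 1).
  assert (Hx0 : x < x0 /\ 0 < x0) by (unfold x0, Rmax; destruct Rle_dec; lra).
  (* for [y >= x0 > 0], [phi'' = b y phi' - E phi < 0], so [phi] falls below its tangent at [x0] *)
  assert (Hconcave : forall y, x0 <= y -> dphi E y <= dphi E x0).
  { intros y Hy. cut (dphi E y <= dphi E x0 + 0 * (y - x0)); [lra|].
    apply (increment_le_of_deriv_le (dphi E) (fun t => b * t * dphi E t - E * phi E t));
      [lra|intros; apply dphi_derive|].
    intros t Ht. specialize (Hneg t ltac:(lra)). specialize (Hphi t ltac:(lra)).
    assert (0 <= b * t) by nra. nra. }
  assert (Hd0 := Hneg x0 ltac:(lra)). assert (Hphi0 := Hphi x0 ltac:(lra)).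
  set (y := x0 + phi E x0 / (- dphi E x0) + 1).
  assert (Hy : 0 < phi E x0 / (- dphi E x0)) by (apply Rdiv_lt_0_compat; lra).
  assert (Htangent : phi E y <= phi E x0 + dphi E x0 * (y - x0)).
  { apply (increment_le_of_deriv_le (phi E) (dphi E)); [unfold y; lra|intros; apply phi_derive|].
    intros t Ht. apply Hconcave. lra. }
  replace (dphi E x0 * (y - x0)) with (- phi E x0 + dphi E x0) in Htangent
    by (unfold y; field; lra).
  specialize (Hphi y ltac:(unfold y; lra)). lra.
Qed.

Lemma dpsi_neg E : 0 < E ->
  (forall x, z0 <= x -> 0 < phi E x) -> (forall x, z0 <= x -> 0 < dphi E x) ->
  (forall x, ztail E <= x -> psi E x <= 2 * E / (b * x)) ->
  forall x, z0 <= x -> dpsi E x < 0.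
Proof.
  intros HE Hphi Hdphi Hsmall x2 Hx2.
  destruct (Rlt_le_dec (dpsi E x2) 0) as [|Hge]; [assumption|exfalso].
  assert (Hne : forall y, z0 <= y -> phi E y <> 0) by (intros y Hy; specialize (Hphi y Hy); lra).
  (* at a root of [psi'] we have [psi'' = b psi > 0], so [psi'] stays positive *)
  assert (Hup : forall y, x2 < y -> 0 < dpsi E y).
  { apply (pos_of_deriv_pos_at_roots (dpsi E)
           (fun y => b * psi E y + (b * y - 2 * psi E y) * dpsi E y) x2); [|exact Hge|].
    - intros y Hy. apply dpsi_derive, Hne. lra.
    - intros p Hp Hp0. rewrite Hp0, Rmult_0_r, Rplus_0_r.
      apply Rmult_lt_0_compat; [lra|apply psi_pos; [apply Hphi|apply Hdphi]; lra]. }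
  set (s := psi E (x2 + 1)).
  assert (Hs : 0 < s) by (apply psi_pos; [apply Hphi|apply Hdphi]; lra).
  set (y := Rmax (ztail E) (x2 + 1) + 2 * E / (b * s) + 1).
  assert (Hq : 0 < 2 * E / (b * s)) by (apply Rdiv_lt_0_compat; nra).
  assert (Hy : ztail E <= y /\ x2 + 1 <= y /\ 2 * E / (b * s) < y).
  { destruct (ztail_spec E (ztail E) ltac:(lra) (Rle_refl _)) as [_ [Hz1 _]].
    unfold y, Rmax; destruct Rle_dec; lra. }
  assert (Hmono : s <= psi E y).
  { apply (nondecreasing_of_deriv_nonneg (psi E) (dpsi E)); [lra| |].
    - intros t Ht. apply psi_derive, Hne. lra.
    - intros t Ht. left. apply Hup. lra. }
  assert (Hfar := Hsmall y (proj1 Hy)).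
  assert (2 * E / (b * y) < s); [|lra].
  apply (Rmult_lt_reg_r (b * y)); [nra|].
  replace (2 * E / (b * y) * (b * y)) with (2 * E) by (field; nra).
  destruct Hy as [_ [_ Hy]]. apply (Rmult_lt_compat_r (b * s)) in Hy; [|nra].
  replace (2 * E / (b * s) * (b * s)) with (2 * E) in Hy by (field; nra). nra.
Qed.

Lemma shooting_threshold : exists E, 0 < E /\
  (forall x, z0 <= x -> 0 < phi E x) /\ (forall x, z0 <= x -> 0 < dphi E x) /\
  (forall x, ztail E <= x -> psi E x <= 2 * E / (b * x)).
Proof.
  destruct (glb_approx crosses) as [E [Hlow Happrox]].
  { eexists. apply crosses_large_E. }
  { exists 0. intros E HE. exact (Rlt_le _ _ (crosses_pos E HE)). }
  assert (Hnear : forall d, 0 < d -> exists E', crosses E' /\ Rabs (E' - E) < d).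
  { intros d Hd. destruct (Happrox d Hd) as [E' [HE' HE'd]]. exists E'.
    split; [exact HE'|]. specialize (Hlow E' HE'). rewrite Rabs_pos_eq; lra. }
  assert (HE0 : 0 <= E).
  { destruct (Rle_lt_dec 0 E) as [|Hneg]; [assumption|exfalso].
    destruct (Happrox (- E) ltac:(lra)) as [E' [HE' HE'd]].
    pose proof (crosses_pos E' HE'). lra. }
  assert (Hphi : forall x, z0 <= x -> 0 < phi E x).
  { apply phi_pos_of_nonneg. intros x Hx.
    destruct (Rle_lt_dec 0 (phi E x)) as [|Hneg]; [assumption|exfalso].
    destruct (crosses_open E) as [d [Hd Hopen]]; [exists x; split; assumption|].
    assert (Hcross : crosses (E - d / 2)).
    { apply Hopen. replace (E - d / 2 - E) with (- (d / 2)) by ring.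
      rewrite Rabs_Ropp, Rabs_pos_eq; lra. }
    specialize (Hlow _ Hcross). lra. }
  assert (Hdphi : forall x, z0 <= x -> 0 < dphi E x).
  { destruct HE0 as [HE|HE]; [exact (dphi_pos_of_phi_pos E HE Hphi)|].
    apply dphi_pos_of_E_nonpos. lra. }
  assert (Hbound : forall x, ztail E <= x -> psi E x <= 2 * E / (b * x)).
  { apply (psi_le_of_no_trap E HE0 Hphi Hdphi). intros x Hx.
    destruct (ztail_spec E x HE0 Hx) as [Hxz0 [Hx1 Hgap]].
    apply (no_trap_at_infimum E Hnear); [intros y Hy; left; apply Hdphi, Hy|lra|lra|exact Hgap]. }
  exists E. repeat split; try assumption.
  destruct HE0 as [HE|HE]; [exact HE|exfalso]. subst E.
  destruct (ztail_spec 0 (ztail 0) (Rle_refl 0) (Rle_refl _)) as [Hz _].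
  assert (Hpos := psi_pos 0 (ztail 0) (Hphi _ Hz) (Hdphi _ Hz)).
  specialize (Hbound (ztail 0) (Rle_refl _)).
  replace (2 * 0 / (b * ztail 0)) with 0 in Hbound by (unfold Rdiv; ring). lra.
Qed.

Lemma riccati_decreasing_solution : exists E (p dp : R -> R),
  p z0 = T /\ (forall z, z0 <= z -> dp z = b * z * p z - E - p z ^ 2) /\
  (forall z, z0 <= z -> is_derive p z (dp z) /\ continuity_pt dp z /\ dp z < 0) /\
  filterlim p (Rbar_locally p_infty) (locally 0).
Proof.
  destruct shooting_threshold as [E [HE [Hphi [Hdphi Hsmall]]]].
  assert (Hne : forall z, z0 <= z -> phi E z <> 0) by (intros z Hz; specialize (Hphi z Hz); lra).
  exists E, (psi E), (dpsi E). split; [|split; [reflexivity|split]].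
  - unfold psi. rewrite phi_z0, dphi_z0. field.
  - intros z Hz. split; [|split].
    + apply psi_derive, Hne, Hz.
    + exact (is_derive_continuity_pt _ _ _ (dpsi_derive E z (Hne z Hz))).
    + exact (dpsi_neg E HE Hphi Hdphi Hsmall z Hz).
  - apply filterlim_locally. intros eps.
    exists (Rmax (ztail E) (2 * E / (b * eps))). intros x Hx.
    assert (Hx1 : ztail E < x /\ 2 * E / (b * eps) < x)
      by (unfold Rmax in Hx; destruct Rle_dec; lra).
    destruct (ztail_spec E x (Rlt_le _ _ HE) (Rlt_le _ _ (proj1 Hx1))) as [Hxz0 [Hx1' _]].
    assert (Hpos := psi_pos E x (Hphi x Hxz0) (Hdphi x Hxz0)).
    assert (Hle := Hsmall x (Rlt_le _ _ (proj1 Hx1))).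
    assert (Hlt : 2 * E / (b * x) < eps).
    { pose proof (cond_pos eps). destruct Hx1 as [_ Hx2].
      apply (Rmult_lt_compat_r (b * eps)) in Hx2; [|nra].
      replace (2 * E / (b * eps) * (b * eps)) with (2 * E) in Hx2 by (field; lra).
      apply (Rmult_lt_reg_r (b * x)); [nra|].
      replace (2 * E / (b * x) * (b * x)) with (2 * E) by (field; lra). nra. }
    change (Rabs (psi E x - 0) < eps). rewrite Rminus_0_r, Rabs_pos_eq; lra.
Qed.

End Shooting.

(** * Back to the Bellman equation *)

Lemma C1_nonneg_of_derive (v dv : R -> R) :
  (forall y, 0 <= y -> is_derive v y (dv y)) -> (forall y, 0 <= y -> continuity_pt dv y) ->
  C1_nonneg v dv.
Proof.
  intros Hd Hc. split; [|split; [|split]].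
  - intros y Hy. apply Hd. lra.
  - assert (H0 := Hd 0 (Rle_refl 0)). apply is_derive_Reals in H0.
    apply filterlim_locally. intros eps.
    destruct (H0 eps (cond_pos eps)) as [d Hnear].
    exists d. intros y Hy Hypos. change (Rabs (y - 0) < d) in Hy. change (0 < y) in Hypos.
    rewrite Rminus_0_r in Hy. change (Rabs ((v y - v 0) / y - dv 0) < eps).
    assert (Hq := Hnear y ltac:(lra) Hy). now rewrite Rplus_0_l in Hq.
  - intros y Hy. apply continuity_pt_filterlim, Hc. lra.
  - eapply filterlim_filter_le_1; [apply filter_le_within|].
    apply continuity_pt_filterlim, Hc. lra.
Qed.

Lemma is_derive_shift_scale (p : R -> R) z0 k L y dp :
  is_derive p (y + z0) dp -> is_derive (fun t => L - p (t + z0) / k) y (- dp / k).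
Proof.
  intros H.
  assert (Hshift : is_derive (fun t => t + z0) y 1) by (auto_derive; [easy|ring]).
  assert (Hc := is_derive_comp p _ y _ _ H Hshift).
  assert (Hs := is_derive_minus _ _ y _ _ (is_derive_const L y) (is_derive_scal _ y (/ k) _ Hc)).
  replace (- dp / k) with (minus zero (scal (/ k) (scal 1 dp)))
    by (unfold minus, plus, opp, zero, scal; simpl; unfold mult; simpl; unfold Rdiv; ring).
  eapply is_derive_ext; [|exact Hs]. intros t.
  unfold minus, plus, opp, scal; simpl; unfold mult; simpl. unfold Rdiv. ring.
Qed.

Lemma continuity_pt_shift_scale (q : R -> R) z0 k y : continuity_pt q (y + z0) ->
  continuity_pt (fun t => - q (t + z0) / k) y.
Proof.
  intros Hq. apply continuity_pt_filterlim.
  apply (continuous_comp (fun t => q (t + z0)) (fun u => - u / k)).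
  - apply (continuous_comp (fun t => t + z0) q).
    + apply (continuous_plus (fun t : R => t)); [apply continuous_id|apply continuous_const].
    + now apply continuity_pt_filterlim.
  - apply (continuous_mult (fun u : R => - u)); [|apply continuous_const].
    apply (continuous_opp (fun u : R => u)), continuous_id.
Qed.

Lemma filterlim_shift_scale (p : R -> R) z0 k L : 0 < k ->
  filterlim p (Rbar_locally p_infty) (locally 0) ->
  filterlim (fun y => L - p (y + z0) / k) (Rbar_locally p_infty) (locally L).
Proof.
  intros Hk Hp. apply filterlim_locally. intros eps.
  assert (Hek : 0 < eps * k) by (apply Rmult_lt_0_compat; [apply cond_pos|exact Hk]).
  destruct (proj1 (filterlim_locally (F := Rbar_locally p_infty) p 0) Hp (mkposreal _ Hek))
    as [M HM].
  exists (M - z0). intros y Hy.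
  assert (Hpy : Rabs (p (y + z0) - 0) < eps * k) by (apply (HM (y + z0)); lra).
  change (Rabs (L - p (y + z0) / k - L) < eps).
  rewrite Rminus_0_r in Hpy.
  replace (L - p (y + z0) / k - L) with (- p (y + z0) * / k) by (field; lra).
  rewrite Rabs_mult, Rabs_Ropp, Rabs_inv, (Rabs_pos_eq k) by lra.
  apply (Rmult_lt_reg_r k); [exact Hk|]. rewrite Rmult_assoc, Rinv_l, Rmult_1_r by lra. exact Hpy.
Qed.

Lemma shift_scale_props (p dp : R -> R) z0 k L : 0 < k ->
  (forall z, z0 <= z -> is_derive p z (dp z) /\ continuity_pt dp z /\ dp z < 0) ->
  filterlim p (Rbar_locally p_infty) (locally 0) ->
  (forall y, 0 <= y -> is_derive (fun t => L - p (t + z0) / k) y (- dp (y + z0) / k) /\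
                       continuity_pt (fun t => - dp (t + z0) / k) y /\ 0 < - dp (y + z0) / k) /\
  filterlim (fun y => L - p (y + z0) / k) (Rbar_locally p_infty) (locally L).
Proof.
  intros Hk Hp Hlim. split; [|exact (filterlim_shift_scale p z0 k L Hk Hlim)].
  intros y Hy. destruct (Hp (y + z0) ltac:(lra)) as [Hd [Hc Hneg]].
  split; [exact (is_derive_shift_scale p z0 k L y _ Hd)|split].
  - exact (continuity_pt_shift_scale dp z0 k y Hc).
  - apply Rdiv_lt_0_compat; lra.
Qed.

Lemma root_of_limit_pos (v : R -> R) L : v 0 <= 0 -> 0 < L ->
  (forall y, 0 <= y -> continuity_pt v y) ->
  filterlim v (Rbar_locally p_infty) (locally L) -> exists y, 0 <= y /\ v y = 0.
Proof.
  intros Hv0 HL Hc Hlim.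
  destruct (proj1 (filterlim_locally (F := Rbar_locally p_infty) v L) Hlim (mkposreal L HL))
    as [M HM].
  set (Y := Rmax M 0 + 1).
  assert (HvY : 0 < v Y).
  { assert (HY : Rabs (v Y - L) < L) by (apply HM; unfold Y, Rmax; destruct Rle_dec; lra).
    apply Rabs_def2 in HY. lra. }
  destruct Hv0 as [Hneg|Hzero]; [|exists 0; split; [lra|exact Hzero]].
  destruct (Ranalysis5.IVT_interv v 0 Y) as [y [Hy Hvy]];
    [intros; apply Hc; lra|unfold Y, Rmax; destruct Rle_dec; lra|exact Hneg|exact HvY|].
  exists y. split; [lra|exact Hvy].
Qed.

Lemma bellman_constant_pos sigma eta alpha_hat h a beta (v dv : R -> R) : 0 < sigma -> 0 < h ->
  (forall y, 0 <= y -> beta = - (alpha_hat / 4) * (v y) ^ 2 + / 2 * sigma ^ 2 * dv y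
                              - eta * y * v y + a * v y + h * y) ->
  (forall y, 0 <= y -> 0 < dv y) -> (exists y, 0 <= y /\ v y = 0) -> 0 < beta.
Proof.
  intros Hs Hh Heq Hdv [y [Hy Hvy]].
  rewrite (Heq y Hy), Hvy.
  assert (0 < / 2 * sigma ^ 2 * dv y) by (apply Rmult_lt_0_compat; [nra|apply Hdv, Hy]).
  nra.
Qed.

Lemma riccati_to_bellman sigma eta alpha_hat h a k E y p dp :
  0 < sigma -> 0 < eta -> 0 < alpha_hat -> k = alpha_hat / (2 * sigma ^ 2) ->
  dp = 2 * eta / sigma ^ 2 * (y - a / eta + alpha_hat * h / (2 * eta ^ 2)) * p - E - p ^ 2 ->
  (E - k ^ 2 * h ^ 2 / eta ^ 2 + 2 * k * a * h / (eta * sigma ^ 2)) * sigma ^ 2 / (2 * k) =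
  - (alpha_hat / 4) * (h / eta - p / k) ^ 2 + / 2 * sigma ^ 2 * (- dp / k)
  - eta * y * (h / eta - p / k) + a * (h / eta - p / k) + h * y.
Proof. intros Hs He Ha -> ->. field. repeat split; lra. Qed.

Theorem theorem1 (sigma eta alpha_hat h r a : R) :
  0 < sigma -> 0 < eta -> 0 < alpha_hat -> 0 < h -> 0 <= r ->
  exists (beta_star : R) (v dv : R -> R),
    0 < beta_star /\
    C1_nonneg v dv /\
    (forall y, 0 <= y ->
       beta_star = - (alpha_hat / 4) * (v y) ^ 2 + / 2 * sigma ^ 2 * dv y
                   - eta * y * v y + a * v y + h * y) /\
    v 0 = - r /\
    (forall x y, 0 <= x -> x <= y -> v x <= v y) /\
    filterlim v (Rbar_locally p_infty) (locally (h / eta)).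
Proof.
  intros Hs He Ha Hh Hr.
  set (k := alpha_hat / (2 * sigma ^ 2)).
  set (z0 := - a / eta + alpha_hat * h / (2 * eta ^ 2)).
  assert (Hk : 0 < k) by (unfold k; apply Rdiv_lt_0_compat; nra).
  assert (Hhe : 0 < h / eta) by (apply Rdiv_lt_0_compat; lra).
  destruct (riccati_decreasing_solution (2 * eta / sigma ^ 2) z0 (k * (h / eta + r)))
    as [E [p [dp [Hp0 [Hric [Hp Hlim]]]]]]; [apply Rdiv_lt_0_compat; nra|nra|].
  set (v y := h / eta - p (y + z0) / k). set (dv y := - dp (y + z0) / k).
  destruct (shift_scale_props p dp z0 k (h / eta) Hk Hp Hlim) as [Hv Hvlim].
  assert (Hv0 : v 0 = - r) by (unfold v; rewrite Rplus_0_l, Hp0; field; lra).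
  assert (Hbellman : forall y, 0 <= y ->
    (E - k ^ 2 * h ^ 2 / eta ^ 2 + 2 * k * a * h / (eta * sigma ^ 2)) * sigma ^ 2 / (2 * k) =
    - (alpha_hat / 4) * (v y) ^ 2 + / 2 * sigma ^ 2 * dv y - eta * y * v y + a * v y + h * y).
  { intros y Hy. apply (riccati_to_bellman sigma eta alpha_hat h a k E y); try easy.
    rewrite Hric by lra. unfold z0, Rdiv. ring. }
  eexists; exists v, dv. split; [|split; [|split; [exact Hbellman|split; [exact Hv0|split]]]].
  - apply (bellman_constant_pos sigma eta alpha_hat h a _ v dv Hs Hh Hbellman);
      [intros y Hy; apply Hv, Hy|].
    apply (root_of_limit_pos v (h / eta)); [lra|exact Hhe| |exact Hvlim].
    intros y Hy. exact (is_derive_continuity_pt _ _ _ (proj1 (Hv y Hy))).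
  - apply C1_nonneg_of_derive; intros y Hy; apply Hv, Hy.
  - intros x y Hx Hxy. apply (nondecreasing_of_deriv_nonneg v dv x y Hxy);
      intros t Ht; [apply Hv|left; apply Hv]; lra.
  - exact Hvlim.
Qed.
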